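(* Let $k,l$ be positive integers with $k \ge 3l$. Then every graph $G$ with $\chi(G) > k$ contains a weakly $l$-connected subgraph $H$ such that $\chi(H) > k-2l$.
   Context: Graphs are finite and simple; $\chi$ denotes the chromatic number. A separation of a graph $G$ is a pair $(A,B)$ with $A\cup B=V(G)$ such that every edge has both ends in $A$ or both ends in $B$; it is proper if $A-B\neq\emptyset$ and $B-A\neq\emptyset$; its order is $|A\cap B|$. A graph $G$ is weakly $k$-connected if for every proper separation $(A,B)$ of $G$ of order at most $k$ we have $\min\{|A-B|,|B-A|\} < |A\cap B|$. *)

From mathcomp Require Import all_boot.
Set Implicit Arguments. Unset Strict Implicit. Unset Printing Implicit Defensive.

Definition is_graph (T : finType) (V : {set T}) (e : rel T) : Prop :=
  (forall x y, e x y -> (x \in V) && (y \in V)) /\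
  (forall x y, e x y = e y x) /\
  (forall x, ~~ e x x).

Definition is_subgraph (T : finType) (S : {set T}) (f : rel T)
  (V : {set T}) (e : rel T) : Prop :=
  is_graph S f /\ S \subset V /\ (forall x y, f x y -> e x y).

Definition colorable (T : finType) (V : {set T}) (e : rel T) (k : nat) : bool :=
  [exists c : {ffun T -> 'I_#|T|.+1},
     [forall x in V, c x < k] &&
     [forall x in V, forall y in V, e x y ==> (c x != c y)]].

(* chromatic number: least k such that (V,e) is k-colourable
   (#|T| colours always suffice, so searching in [0, #|T|] is exhaustive). *)
Definition chi (T : finType) (V : {set T}) (e : rel T) : nat :=
  find (colorable V e) (iota 0 #|T|.+1).

Definition separation (T : finType) (V : {set T}) (e : rel T) (A B : {set T}) : Prop :=
  A \subset V /\ B \subset V /\ A :|: B = V /\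
  (forall x y, e x y -> ((x \in A) && (y \in A)) || ((x \in B) && (y \in B))).

Definition proper_separation (T : finType) (V : {set T}) (e : rel T) (A B : {set T}) : Prop :=
  separation V e A B /\ A :\: B != set0 /\ B :\: A != set0.

Definition weakly_connected (T : finType) (V : {set T}) (e : rel T) (k : nat) : Prop :=
  forall A B : {set T}, proper_separation V e A B -> #|A :&: B| <= k ->
    minn #|A :\: B| #|B :\: A| < #|A :&: B|.

(* Let W be a vertex-minimal subgraph of G that is not k-colourable. For U ⊆ W call
   the vertices of U with a neighbour in W \ U its boundary ∂U, and the others its
   interior. A k-colouring of W minus the interior of U leaves k - |∂U| colours free
   for the interior, so by criticality a nonempty interior needs more than k - |∂U|
   colours. Take U ⊆ W minimal with |∂U| ≤ 2l and nonempty interior; then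
   χ(G[U]) > k - 2l. If (A, B) were a separation of G[U] of order t ≤ l with both
   sides of size at least t, then ∂A ⊆ (A ∩ B) ∪ (∂U ∩ (A \ B)) and symmetrically for
   B; since the two shares of ∂U add up to at most 2l, A or B would be a smaller set
   of the same kind, unless the whole interior lies in A ∩ B, which is too small. *)

From mathcomp Require Import all_boot zify.
From Stdlib Require Import Classical.

Set Implicit Arguments. Unset Strict Implicit. Unset Printing Implicit Defensive.

Section Colorings.
Variable T : finType.
Implicit Types (V X : {set T}) (e : rel T).

Definition colorable_nat V e (j : nat) : Prop :=
  exists c : T -> nat, (forall x, x \in V -> c x < j) /\
    (forall x y, x \in V -> y \in V -> e x y -> c x <> c y).

Lemma colorable_nat_le V e i j :
  i <= j -> colorable_nat V e i -> colorable_nat V e j.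
Proof.
by move=> le_ij [c [c_lt c_ok]]; exists c; split=> // x /c_lt/leq_trans; apply.
Qed.

Lemma colorable_nat_card V e : irreflexive e -> colorable_nat V e #|V|.
Proof.
move=> e_irr; exists (index^~ (enum V)); split=> [x xV | x y xV yV exy].
  by rewrite cardE index_mem mem_enum.
move=> /(index_inj x); rewrite !mem_enum => /(_ xV yV) xy.
by move: exy; rewrite xy e_irr.
Qed.

Lemma colorable_natP V e j :
  j <= #|T|.+1 -> reflect (colorable_nat V e j) (colorable V e j).
Proof.
move=> le_jT; apply: (iffP existsP) => [[c /andP[/forall_inP c_lt /forall_inP c_ok]] |].
  exists (fun x => val (c x)); split=> [x /c_lt // | x y xV yV exy /val_inj cxy].
  by move: (c_ok x xV) => /forall_inP/(_ y yV)/implyP/(_ exy); rewrite cxy eqxx.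
move=> [c [c_lt c_ok]]; have c_ltT x : x \in V -> c x < #|T|.+1.
  by move=> /c_lt/leq_trans; apply.
exists [ffun x => inord (c x)]; apply/andP; split.
  by apply/forall_inP=> x xV; rewrite ffunE inordK ?c_ltT ?c_lt.
apply/forall_inP=> x xV; apply/forall_inP=> y yV; apply/implyP=> exy.
by rewrite !ffunE; apply/eqP=> /(congr1 val); rewrite /= !inordK ?c_ltT //; apply: c_ok.
Qed.

Lemma chi_gtP V e j : irreflexive e -> j < chi V e <-> ~ colorable_nat V e j.
Proof.
move=> e_irr; have chi_le : chi V e <= #|T|.+1.
  by have := find_size (colorable V e) (iota 0 #|T|.+1); rewrite size_iota.
split=> [lt_j /colorable_natP col | uncol].
  by have := before_find 0 lt_j; rewrite nth_iota ?add0n ?col //; lia.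
rewrite ltnNge; apply/negP=> le_chi; apply: uncol.
have has_col : has (colorable V e) (iota 0 #|T|.+1).
  apply/hasP; exists #|V|; first by rewrite mem_iota add0n ltnS max_card.
  by apply/colorable_natP; [rewrite ltnW // ltnS max_card | exact: colorable_nat_card].
have := nth_find 0 has_col; rewrite has_find size_iota in has_col.
rewrite nth_iota // add0n => /colorable_natP col.
exact: colorable_nat_le le_chi (col (ltnW has_col)).
Qed.

Lemma size_filter_iota_notin (s : seq nat) k :
  k - size s <= size [seq i <- iota 0 k | i \notin s].
Proof.
have le_s : count (mem s) (iota 0 k) <= size s.
  rewrite -size_filter; apply: uniq_leq_size; first exact/filter_uniq/iota_uniq.
  by move=> i; rewrite mem_filter => /andP[].
change (k - size s <= size (filter (predC (mem s)) (iota 0 k))).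
by have := count_predC (mem s) (iota 0 k); rewrite size_filter size_iota; lia.
Qed.

Lemma ex_minimal_subset (P : {set T} -> Prop) X : P X ->
  exists Y : {set T}, [/\ Y \subset X, P Y & forall Z : {set T}, Z \proper Y -> ~ P Z].
Proof.
elim: {X}#|X| {-2}X (leqnn #|X|) => [|n IH] X leX PX.
  by exists X; split=> // Z /proper_card; lia.
have [[Z [ltZX PZ]] | no_smaller] := classic (exists Z : {set T}, Z \proper X /\ P Z).
  have [|Y [sYZ PY minY]] := IH Z _ PZ; first by move/proper_card: ltZX; lia.
  by exists Y; split=> //; apply: subset_trans sYZ (proper_sub ltZX).
by exists X; split=> // Z ltZX PZ; apply: no_smaller; exists Z.
Qed.

End Colorings.

Section Graphs.
Variable T : finType.
Implicit Types (V U X : {set T}) (e : rel T).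

Definition induced e U : rel T := fun x y => [&& e x y, x \in U & y \in U].

Lemma induced_subgraph V e U :
  is_graph V e -> U \subset V -> is_subgraph U (induced e U) V e.
Proof.
move=> [_ [e_sym e_irr]] sUV; do !split=> //.
- by move=> x y /and3P[_ -> ->].
- by move=> x y; rewrite /induced e_sym [(x \in U) && _]andbC.
- by move=> x; rewrite /induced negb_and e_irr.
- by move=> x y /and3P[].
Qed.

Lemma colorable_nat_induced X U e j :
  X \subset U -> colorable_nat U (induced e U) j -> colorable_nat X e j.
Proof.
move=> /subsetP sXU [c [c_lt c_ok]]; exists c.
split=> [x /sXU/c_lt // | x y /sXU xU /sXU yU exy]; apply: c_ok => //.
by rewrite /induced exy xU yU.
Qed.

Lemma separation_sym V e A B : separation V e A B -> separation V e B A.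
Proof.
move=> [sAV [sBV [AB e_sep]]]; do !split=> //; first by rewrite setUC.
by move=> x y /e_sep; rewrite orbC.
Qed.

End Graphs.

Section CriticalSubgraph.
Variables (T : finType) (e : rel T) (k : nat) (W : {set T}).
Implicit Types U Z : {set T}.
Hypotheses (e_sym : symmetric e) (e_irr : irreflexive e).
Hypothesis W_uncol : ~ colorable_nat W e k.
Hypothesis W_crit : forall Z, Z \proper W -> colorable_nat Z e k.

Definition boundary (U : {set T}) : {set T} :=
  [set x in U | [exists y, [&& e x y, y \in W & y \notin U]]].

Definition interior (U : {set T}) : {set T} := U :\: boundary U.

Lemma interior_adj U x y : x \in interior U -> y \in W -> e x y -> y \in U.
Proof.
rewrite !inE => /andP[not_bd xU] yW exy; apply: contraNT not_bd => yU.
by rewrite xU; apply/existsP; exists y; rewrite exy yW.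
Qed.

Lemma interior_uncolorable U : U \subset W -> interior U != set0 ->
  ~ colorable_nat (interior U) e (k - #|boundary U|).
Proof.
move=> sUW /set0Pn[v vI] [c2 [c2_lt c2_ok]].
have [|c1 [c1_lt c1_ok]] := W_crit (Z := W :\: interior U).
  apply/properP; split; first exact: subsetDl.
  exists v; last by rewrite inE vI.
  by move: vI; rewrite inE => /andP[_ /(subsetP sUW)].
pose free := [seq i <- iota 0 k | i \notin [seq c1 y | y <- enum (boundary U)]].
have free_size : k - #|boundary U| <= size free.
  have := size_filter_iota_notin [seq c1 y | y <- enum (boundary U)] k.
  by rewrite size_map -cardE.
pose c x := if x \in interior U then nth 0 free (c2 x) else c1 x.
have c_free x : x \in interior U -> c x \in free.
  by move=> xI; rewrite /c xI mem_nth // (leq_trans (c2_lt x xI)).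
have c_cross x y : x \in interior U -> y \in W -> y \notin interior U -> e x y ->
    c x != c y.
  move=> xI yW yI exy; have yB : y \in boundary U.
    by move: yI; rewrite inE (interior_adj xI yW exy) andbT negbK.
  move: (c_free x xI); rewrite /c (negbTE yI) mem_filter => /andP[+ _].
  by apply: contra => /eqP ->; apply: map_f; rewrite mem_enum.
apply: W_uncol; exists c; split=> [x xW | x y xW yW exy].
  have [xI | xI] := boolP (x \in interior U).
    by move: (c_free x xI); rewrite mem_filter mem_iota add0n => /and3P[].
  by rewrite /c (negbTE xI); apply: c1_lt; rewrite inE xI.
apply/eqP; have [xI | xI] := boolP (x \in interior U);
  have [yI | yI] := boolP (y \in interior U).
- rewrite /c xI yI nth_uniq ?(leq_trans (c2_lt _ _)) ?filter_uniq ?iota_uniq //.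
  by apply/eqP; apply: c2_ok.
- exact: c_cross.
- by rewrite eq_sym; apply: c_cross; rewrite // e_sym.
- by rewrite /c (negbTE xI) (negbTE yI); apply/eqP; apply: c1_ok; rewrite // inE ?xI ?yI.
Qed.

Lemma interior_card U : U \subset W -> interior U != set0 ->
  k - #|boundary U| < #|interior U|.
Proof.
move=> sUW intU; rewrite ltnNge; apply/negP=> small.
exact: interior_uncolorable sUW intU (colorable_nat_le small (colorable_nat_card _ e_irr)).
Qed.

Section SeparatedPiece.
Variables (U A B : {set T}).
Hypothesis sep : separation U (induced e U) A B.

Lemma boundary_separation :
  boundary A \subset (A :&: B) :|: (boundary U :&: (A :\: B)).
Proof.
have [sAU [_ [_ e_sep]]] := sep; apply/subsetP=> x.
rewrite !inE => /andP[xA /existsP[y /and3P[exy yW yA]]].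
rewrite xA /=; have [//|xB] := boolP (x \in B).
have xU : x \in U by apply: (subsetP sAU).
rewrite xU /= andbT; apply/existsP; exists y; rewrite exy yW /=.
apply: contraNN xB => yU.
have /orP[/andP[_ yA'] | /andP[//]] := e_sep x y (introT and3P (And3 exy xU yU)).
by rewrite yA' in yA.
Qed.

Lemma interior_separation : (A :\: B) :\: boundary U \subset interior A.
Proof.
apply/subsetP=> x; rewrite !in_setD => /and3P[xbU xB xA]; rewrite xA andbT.
apply: contraNN xbU => /(subsetP boundary_separation).
by rewrite in_setU !in_setI in_setD (negbTE xB) andbF /= => /andP[].
Qed.

End SeparatedPiece.

Definition fragment (l : nat) U : Prop :=
  [/\ U \subset W, #|boundary U| <= 2 * l & interior U != set0].

Lemma critical_fragment l : fragment l W.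
Proof.
have bdW : boundary W = set0.
  by apply/setP=> x; rewrite !inE; apply/negP=> /andP[_ /existsP[y /and3P[_ ->]]].
rewrite /fragment /interior bdW cards0 setD0; split=> //.
apply/negP=> /eqP W0; apply: W_uncol.
by apply: colorable_nat_le (colorable_nat_card W e_irr); rewrite W0 cards0.
Qed.

Section MinimalFragment.
Variables (l : nat) (U : {set T}).
Hypothesis k_ge : 3 * l <= k.
Hypothesis U_frag : fragment l U.
Hypothesis U_min : forall Z, Z \proper U -> ~ fragment l Z.

Lemma separation_side_large A B : separation U (induced e U) A B ->
  B :\: A != set0 -> (A :\: B) :\: boundary U != set0 ->
  2 * l < #|A :&: B| + #|boundary U :&: (A :\: B)|.
Proof.
move=> sep /set0Pn[y yBA] /set0Pn[x xAB]; have [sAU [sBU _]] := sep.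
rewrite ltnNge; apply/negP=> small; apply: (U_min (Z := A)).
  apply/properP; split=> //; move: yBA; rewrite inE => /andP[yA yB].
  by exists y; first exact: (subsetP sBU).
split.
- by case: U_frag => sUW _ _; apply: subset_trans sAU sUW.
- apply: leq_trans small; apply: leq_trans (subset_leq_card (boundary_separation sep)) _.
  exact: leq_card_setU.
- by apply/set0Pn; exists x; apply: (subsetP (interior_separation sep)).
Qed.

Lemma minimal_fragment_weakly_connected : weakly_connected U (induced e U) l.
Proof.
have [sUW bdU intU] := U_frag.
move=> A B [sep [nAB nBA]] small; rewrite ltnNge leq_min; apply/negP=> /andP[tA tB].
have [_ [_ [AB _]]] := sep.
have bd_split : #|boundary U :&: (A :\: B)| + #|boundary U :&: (B :\: A)| <= 2 * l.
  apply: leq_trans bdU; rewrite -(cardsID (A :\: B) (boundary U)) leq_add2l.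
  apply/subset_leq_card/subsetP=> x; rewrite !(in_setI, in_setD) => /and3P[-> xA xB].
  by rewrite xB (negbTE xA).
have covered X Y : (X :\: Y) :\: boundary U = set0 ->
    #|X :\: Y| <= #|boundary U :&: (X :\: Y)|.
  by move/eqP; rewrite setD_eq0 => /setIidPr ->.
have sideA := separation_side_large sep nBA.
have sideB := separation_side_large (separation_sym sep) nAB.
rewrite [B :&: A]setIC in sideB.
have [iA | /sideA] := eqVneq ((A :\: B) :\: boundary U) set0;
  have [iB | /sideB] := eqVneq ((B :\: A) :\: boundary U) set0.
- have : interior U \subset A :&: B.
    apply/subsetP=> x; rewrite in_setD in_setI => /andP[xbU]; rewrite -AB in_setU.
    move/setP/(_ x): iA; move/setP/(_ x): iB; rewrite !in_setD in_set0 xbU /=.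
    by case: (x \in A); case: (x \in B).
  by move/subset_leq_card; have := interior_card sUW intU; lia.
- by have := covered _ _ iA; lia.
- by have := covered _ _ iB; lia.
- lia.
Qed.

End MinimalFragment.
End CriticalSubgraph.

Theorem lemma2p1 (k l : nat) (T : finType) (V : {set T}) (e : rel T) :
  0 < k -> 0 < l -> 3 * l <= k ->
  is_graph V e -> k < chi V e ->
  exists (S : {set T}) (f : rel T),
    is_subgraph S f V e /\ weakly_connected S f l /\ k - 2 * l < chi S f.
Proof.
move=> _ _ k_ge G chi_gt; have [_ [e_sym e_loopless]] := G.
have e_irr : irreflexive e := fun x => negbTE (e_loopless x).
have [W [sWV W_uncol W_min]] :=
  ex_minimal_subset (P := fun Z => ~ colorable_nat Z e k) ((chi_gtP V k e_irr).1 chi_gt).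
have W_crit (Z : {set T}) : Z \proper W -> colorable_nat Z e k by move=> /W_min/NNPP.
have [U [sUW U_frag U_min]] := ex_minimal_subset (critical_fragment e_irr W_uncol l).
have [_ bdU intU] := U_frag.
exists U, (induced e U); split; [|split].
- exact: induced_subgraph G (subset_trans sUW sWV).
- exact: (minimal_fragment_weakly_connected e_sym e_irr W_uncol W_crit k_ge U_frag U_min).
- have U_irr : irreflexive (induced e U) by move=> x; rewrite /induced e_irr.
  apply/(chi_gtP U _ U_irr) => /(colorable_nat_induced (subsetDl U (boundary e W U))).
  apply: contra_not (interior_uncolorable e_sym W_uncol W_crit sUW intU).
  by apply: colorable_nat_le; lia.
Qed.
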